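(* For $t\in\bar\tau_\delta=\{0,\delta,\dots,T\}$ let $v^t$ be the value function at time $t$ and $v_h^t$ its approximation given by the ideal max-plus finite element method. Then \[ \|v_h^T-v^T\|_\infty\leq\Big(1+\frac T\delta\Big)\sup_{t\in\bar\tau_\delta}\Big(\|P^{-\mathcal Z_h}(v^t)-v^t\|_\infty+\|P_{\mathcal W_h}(v^t)-v^t\|_\infty\Big). \]
   Context: Optimal control setting: $X\subseteq\mathbb{R}^n$, $U\subseteq\mathbb{R}^m$, $\ell:X\times U\to\mathbb R$, $f:X\times U\to\mathbb{R}^n$, $T>0$, $\phi:X\to\mathbb{R}\cup\{-\infty\}$. For $t\ge0$ and $g:X\to\overline{\mathbb R}$, $S^tg(x)=\sup\{\int_0^t\ell(\mathbf x(s),\mathbf u(s))ds+g(\mathbf x(t))\}$ over measurable $\mathbf u:[0,t]\to U$ and absolutely continuous $\mathbf x:[0,t]\to X$ with $\dot{\mathbf x}=f(\mathbf x,\mathbf u)$ a.e. and $\mathbf x(0)=x$; value function $v^t=S^t\phi$. Arithmetic in $\overline{\mathbb R}=\mathbb{R}\cup\{\pm\infty\}$ with $-\infty$ absorbing for $+$; $a\backslash b=\max\{\lambda\in\overline{\mathbb{R}}:a+\lambda\leq b\}$. $\langle u,v\rangle=\sup_{x\in X}(u(x)+v(x))$. Finite elements $w_1,\dots,w_p$ and test functions $z_1,\dots,z_q$, functions $X\to\mathbb{R}\cup\{-\infty\}$. $W_h\lambda=\sup_i(w_i+\lambda_i)$; $(W_h\backslash g)_i=\inf_{x\in X}(w_i(x)\backslash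 g(x))$; $P_{\mathcal W_h}g=W_h(W_h\backslash g)$; $P^{-\mathcal Z_h}g(x)=\min_j\big(z_j(x)\backslash\langle z_j,g\rangle\big)$. For a matrix $A$: $(A\lambda)_j=\max_k(A_{jk}+\lambda_k)$, $(A\backslash\mu)_i=\min_jA_{ji}\backslash\mu_j$. Ideal max-plus finite element method: $N\geq1$, $\delta=T/N$, $(M_h)_{ji}=\langle z_j,w_i\rangle$, $(K_h)_{ji}=\langle z_j,S^\delta w_i\rangle$, $\lambda^0=W_h\backslash\phi$, $\lambda^{t+\delta}=M_h\backslash(K_h\lambda^t)$, $v_h^t=W_h\lambda^t$. For $u,v:X\to\overline{\mathbb R}$, $\|u-v\|_\infty=\inf\{\lambda\geq0: v-\lambda\leq u\leq v+\lambda\}$ (equal to $\sup_x|u(x)-v(x)|$ when $u-v$ is finite-valued). *)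

From HB Require Import structures.
From mathcomp Require Import all_boot all_order all_algebra.
From mathcomp Require Import all_classical all_reals all_analysis.
Set Implicit Arguments. Unset Strict Implicit. Unset Printing Implicit Defensive.
Import Order.TTheory GRing.Theory Num.Theory.
Import numFieldNormedType.Exports.
Local Open Scope classical_set_scope.
Local Open Scope ring_scope.

Section MaxPlus.
Variable R : realType.

(* residuation a \ b = max { lambda in \bar R : a + lambda <= b }
   (with -oo absorbing for +, which is mathcomp's adde) *)
Definition resid (a b : \bar R) : \bar R := ereal_sup [set l | (a + l <= b)%E].

Definition abs_cont_on n (y : R -> 'rV[R]_n) (t : R) : Prop :=
  forall e : R, 0 < e -> exists2 d : R, 0 < d &
    forall (K : nat) (a b : nat -> R),
      (forall k, (k < K)%N -> 0 <= a k /\ a k <= b k /\ b k <= t) ->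
      (forall k, (k.+1 < K)%N -> b k <= a k.+1) ->
      \sum_(k < K) (b k - a k) < d ->
      \sum_(k < K) `|y (b k) - y (a k)| < e.

Definition admissible n m (X : set 'rV[R]_n) (U : set 'rV[R]_m)
  (ell : 'rV[R]_n -> 'rV[R]_m -> R) (f : 'rV[R]_n -> 'rV[R]_m -> 'rV[R]_n)
  (t : R) (x0 : 'rV[R]_n) (u : R -> 'rV[R]_m) (y : R -> 'rV[R]_n) : Prop :=
  (forall s, `[0, t]%classic s -> U (u s)) /\
  (forall i : 'I_m, measurable_fun `[0, t]%classic (fun s => u s ord0 i)) /\
  (forall s, `[0, t]%classic s -> X (y s)) /\
  abs_cont_on y t /\
  {ae @lebesgue_measure R, forall s, `]0, t[%classic s ->
      derivable y s 1 /\ 'D_1 y s = f (y s) (u s)} /\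
  y 0 = x0 /\
  measurable_fun `[0, t]%classic (fun s => ell (y s) (u s)).

Definition run_cost n m (ell : 'rV[R]_n -> 'rV[R]_m -> R) (t : R)
  (u : R -> 'rV[R]_m) (y : R -> 'rV[R]_n) : \bar R :=
  \int[@lebesgue_measure R]_(s in `[0, t]) (ell (y s) (u s))%:E.

Definition S n m (X : set 'rV[R]_n) (U : set 'rV[R]_m)
  (ell : 'rV[R]_n -> 'rV[R]_m -> R) (f : 'rV[R]_n -> 'rV[R]_m -> 'rV[R]_n)
  (t : R) (g : 'rV[R]_n -> \bar R) (x : 'rV[R]_n) : \bar R :=
  ereal_sup [set r | exists u y, admissible X U ell f t x u y /\
     r = (run_cost ell t u y + g (y t))%E].

Definition supnorm n (X : set 'rV[R]_n) (u v : 'rV[R]_n -> \bar R) : \bar R :=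
  ereal_inf [set l | (0 <= l)%E /\
     forall x, X x -> (v x - l <= u x)%E /\ (u x <= v x + l)%E].

Definition pairing n (X : set 'rV[R]_n) (u v : 'rV[R]_n -> \bar R) : \bar R :=
  ereal_sup [set (u x + v x)%E | x in X].

Definition Wop n p (w : 'I_p -> 'rV[R]_n -> \bar R) (lam : 'I_p -> \bar R)
  : 'rV[R]_n -> \bar R :=
  fun x => ereal_sup [set (w i x + lam i)%E | i in [set: 'I_p]].

Definition Wres n p (X : set 'rV[R]_n) (w : 'I_p -> 'rV[R]_n -> \bar R)
  (g : 'rV[R]_n -> \bar R) : 'I_p -> \bar R :=
  fun i => ereal_inf [set resid (w i x) (g x) | x in X].

Definition PW n p (X : set 'rV[R]_n) (w : 'I_p -> 'rV[R]_n -> \bar R)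
  (g : 'rV[R]_n -> \bar R) : 'rV[R]_n -> \bar R := Wop w (Wres X w g).

Definition PZ n q (X : set 'rV[R]_n) (z : 'I_q -> 'rV[R]_n -> \bar R)
  (g : 'rV[R]_n -> \bar R) : 'rV[R]_n -> \bar R :=
  fun x => ereal_inf [set resid (z j x) (pairing X (z j) g) | j in [set: 'I_q]].

Definition mxact q p (A : 'I_q -> 'I_p -> \bar R) (lam : 'I_p -> \bar R)
  : 'I_q -> \bar R :=
  fun j => ereal_sup [set (A j k + lam k)%E | k in [set: 'I_p]].

Definition mxres q p (A : 'I_q -> 'I_p -> \bar R) (mu : 'I_q -> \bar R)
  : 'I_p -> \bar R :=
  fun i => ereal_inf [set resid (A j i) (mu j) | j in [set: 'I_q]].

Fixpoint mpfem_coeffs n m p q (X : set 'rV[R]_n) (U : set 'rV[R]_m)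
  (ell : 'rV[R]_n -> 'rV[R]_m -> R) (f : 'rV[R]_n -> 'rV[R]_m -> 'rV[R]_n)
  (delta : R) (phi : 'rV[R]_n -> \bar R)
  (w : 'I_p -> 'rV[R]_n -> \bar R) (z : 'I_q -> 'rV[R]_n -> \bar R)
  (k : nat) : 'I_p -> \bar R :=
  match k with
  | O => Wres X w phi
  | k'.+1 =>
      let M := fun j i => pairing X (z j) (w i) in
      let Kh := fun j i => pairing X (z j) (S X U ell f delta (w i)) in
      mxres M (mxact Kh (mpfem_coeffs X U ell f delta phi w z k'))
  end.

End MaxPlus.

(* Let e_k be the sup-norm error of the method at time k delta and eps_k the
   sum of the two projection errors of v^(k delta).  The operators S^delta,
   P^(-Z_h) and P_(W_h) are monotone and commute with the addition of
   constants, hence are nonexpansive for the sup-norm.  Since S^delta commutes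
   with max-plus combinations and with the pairings, the method reads
   v_h^(t+delta) = P_(W_h) P^(-Z_h) S^delta v_h^t, whereas the dynamic
   programming principle S^(s+t) = S^s S^t (gluing and splitting trajectories)
   gives v^(t+delta) = S^delta v^t.  The triangle inequality through
   P_(W_h) P^(-Z_h) v^(t+delta) then yields e_(k+1) <= e_k + eps_(k+1), the
   first step being bounded by eps_0 + eps_1, and summing over the N + 1
   instants gives the factor N + 1 = 1 + T/delta. *)

From HB Require Import structures.
From mathcomp Require Import all_boot all_order all_algebra.
From mathcomp Require Import all_classical all_reals all_analysis.
From mathcomp Require Import measurable_realfun.
From mathcomp Require Import lra.
Import Order.TTheory GRing.Theory Num.Theory.
Import numFieldNormedType.Exports.
Set Implicit Arguments. Unset Strict Implicit. Unset Printing Implicit Defensive.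
Local Open Scope classical_set_scope.
Local Open Scope ring_scope.

Section ExtendedRealBounds.
Variable R : realType.
Local Open Scope ereal_scope.
Implicit Types (a b c l m : \bar R) (A : set \bar R).

Lemma ereal_sup_leP A m : ereal_sup A <= m <-> (forall a, A a -> a <= m).
Proof.
split=> [supAm a Aa|]; last exact: ge_ereal_sup.
exact: le_trans (ereal_sup_ubound Aa) supAm.
Qed.

Lemma ereal_inf_geP A m : m <= ereal_inf A <-> (forall a, A a -> m <= a).
Proof.
split=> [minfA a Aa|]; last exact: le_ereal_inf_tmp.
exact: le_trans minfA (ereal_inf_lbound Aa).
Qed.

Lemma ereal_sup_addl_leP A c m :
  c + ereal_sup A <= m <-> (forall a, A a -> c + a <= m).
Proof.
split=> [cAm a Aa|cAm].
  by apply: le_trans cAm; apply: leeD => //; exact: ereal_sup_ubound.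
case: c cAm => [r| |] cAm; last by rewrite leNye.
- rewrite addeC -leeBrDr //; apply/ereal_sup_leP => a Aa.
  by rewrite leeBrDr // addeC; exact: cAm.
- have [->|m_noty] := eqVneq m +oo; first exact: leey.
  suff /eqP -> : ereal_sup A == -oo by rewrite addeNy leNye.
  rewrite -leeNy_eq; apply/ereal_sup_leP => a Aa; move: (cAm a Aa).
  by case: a {Aa} => [r| |] //=; rewrite ?addye ?leye_eq ?(negbTE m_noty).
Qed.

Lemma ereal_sup_addr_leP A c m :
  ereal_sup A + c <= m <-> (forall a, A a -> a + c <= m).
Proof.
rewrite addeC ereal_sup_addl_leP.
by split=> cAm a /cAm; rewrite addeC.
Qed.

Lemma resid_geP a b l : l <= resid a b <-> a + l <= b.
Proof.
split=> [lab|]; last exact: ereal_sup_ubound.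
apply: le_trans (leeD (lexx a) lab) _.
by apply/ereal_sup_addl_leP.
Qed.

Lemma resid_le_shift a b b' (l : R) :
  b <= b' + l%:E -> resid a b <= resid a b' + l%:E.
Proof.
move=> bb'; rewrite -leeBlDr //; apply/resid_geP; rewrite addeA leeBlDr //.
by apply: le_trans bb'; apply/resid_geP.
Qed.

Lemma ereal_sup_image_le_shift (I : Type) (D : set I) (F G : I -> \bar R) (l : R) :
  (forall i, D i -> F i <= G i + l%:E) ->
  ereal_sup (F @` D) <= ereal_sup (G @` D) + l%:E.
Proof.
move=> FG; apply/ereal_sup_leP => _ [i Di <-]; apply: le_trans (FG i Di) _.
by apply: leeD => //; apply: ereal_sup_ubound; exists i.
Qed.

Lemma ereal_inf_image_le_shift (I : Type) (D : set I) (F G : I -> \bar R) (l : R) :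
  (forall i, D i -> F i <= G i + l%:E) ->
  ereal_inf (F @` D) <= ereal_inf (G @` D) + l%:E.
Proof.
move=> FG; rewrite -leeBlDr //; apply/ereal_inf_geP => _ [i Di <-].
by rewrite leeBlDr //; apply: le_trans (FG i Di); apply: ereal_inf_lbound; exists i.
Qed.

End ExtendedRealBounds.

Section Nonexpansive.
Variables (R : realType) (n m p q : nat) (X : set 'rV[R]_n) (U : set 'rV[R]_m).
Variables (ell : 'rV[R]_n -> 'rV[R]_m -> R) (f : 'rV[R]_n -> 'rV[R]_m -> 'rV[R]_n).
Variables (w : 'I_p -> 'rV[R]_n -> \bar R) (z : 'I_q -> 'rV[R]_n -> \bar R).
Local Open Scope ereal_scope.
Implicit Types (g h : 'rV[R]_n -> \bar R) (l : R).

Definition le_on g h l := forall x, X x -> g x <= h x + l%:E.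

Definition close_on g h l := le_on g h l /\ le_on h g l.

Lemma S_le_on t g h l : (0 <= t)%R -> le_on g h l ->
  forall x, S X U ell f t g x <= S X U ell f t h x + l%:E.
Proof.
move=> t0 gh x; apply/ereal_sup_leP => _ [u [y [adm ->]]].
have Xyt : X (y t) by case: adm => _ [_ [Xy _]]; apply: Xy; rewrite /= in_itv /= t0 lexx.
apply: le_trans (_ : _ <= run_cost ell t u y + (h (y t) + l%:E)) _.
  by apply: leeD => //; exact: gh.
by rewrite addeA; apply: leeD => //; apply: ereal_sup_ubound; exists u, y.
Qed.

Lemma pairing_le_on (e : 'rV[R]_n -> \bar R) g h l :
  le_on g h l -> pairing X e g <= pairing X e h + l%:E.
Proof.
by move=> gh; apply: ereal_sup_image_le_shift => x Xx; rewrite -addeA leeD2l // gh.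
Qed.

Lemma PZ_le_on g h l : le_on g h l -> forall x, PZ X z g x <= PZ X z h x + l%:E.
Proof.
move=> gh x; apply: ereal_inf_image_le_shift => j _.
by apply: resid_le_shift; exact: pairing_le_on.
Qed.

Lemma Wres_le_on g h l : le_on g h l ->
  forall i, Wres X w g i <= Wres X w h i + l%:E.
Proof.
by move=> gh i; apply: ereal_inf_image_le_shift => x Xx; apply: resid_le_shift; exact: gh.
Qed.

Lemma Wop_le_shift (la mu : 'I_p -> \bar R) l : (forall i, la i <= mu i + l%:E) ->
  forall x, Wop w la x <= Wop w mu x + l%:E.
Proof.
by move=> lamu x; apply: ereal_sup_image_le_shift => i _; rewrite -addeA leeD2l.
Qed.

Lemma PW_le_on g h l : le_on g h l -> forall x, PW X w g x <= PW X w h x + l%:E.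
Proof. by move=> gh; apply: Wop_le_shift; exact: Wres_le_on. Qed.

Lemma close_on_trans g h k l1 l2 :
  close_on g h l1 -> close_on h k l2 -> close_on g k (l1 + l2).
Proof.
move=> [gh hg] [hk kh]; split=> x Xx; rewrite EFinD.
  by apply: le_trans (gh x Xx) _; rewrite [l1%:E + _]addeC addeA leeD2r // hk.
by apply: le_trans (kh x Xx) _; rewrite addeA leeD2r // hg.
Qed.

Lemma close_on_le g h l l' : (l <= l')%R -> close_on g h l -> close_on g h l'.
Proof.
move=> ll' [gh hg]; split=> x Xx.
  by apply: le_trans (gh x Xx) _; rewrite leeD2l // lee_fin.
by apply: le_trans (hg x Xx) _; rewrite leeD2l // lee_fin.
Qed.

Lemma close_on_refl g : close_on g g 0.
Proof. by split=> x _; rewrite adde0. Qed.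

Lemma supnorm_ge0 g h : 0 <= supnorm X g h.
Proof. by apply/ereal_inf_geP => a []. Qed.

Lemma supnorm_le_close g h l : (0 <= l)%R -> close_on g h l -> supnorm X g h <= l%:E.
Proof.
move=> l0 [gh hg]; apply: ereal_inf_lbound; split; first by rewrite lee_fin.
by move=> x Xx; split; [rewrite leeBlDr //; exact: hg|exact: gh].
Qed.

Lemma supnorm_id g : supnorm X g g = 0.
Proof.
by apply/le_anti; rewrite supnorm_ge0 andbT supnorm_le_close //; exact: close_on_refl.
Qed.

Lemma supnorm_lt_close g h c : supnorm X g h < c ->
  exists l : R, [/\ (0 <= l)%R, l%:E < c & close_on g h l].
Proof.
move=> /ereal_inf_lt [y [y0 gyh] yc].
have yfin : y \is a fin_num by rewrite ge0_fin_numE // (lt_le_trans yc (leey _)).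
exists (fine y); rewrite fineK //; split => //; first by rewrite -lee_fin fineK.
by split=> x Xx; have [hg gh] := gyh x Xx; rewrite fineK // -leeBlDr.
Qed.

Lemma supnorm_le_add g1 h1 g2 h2 g h :
  (forall l1 l2, (0 <= l1)%R -> (0 <= l2)%R ->
     close_on g1 h1 l1 -> close_on g2 h2 l2 -> close_on g h (l1 + l2)) ->
  supnorm X g h <= supnorm X g1 h1 + supnorm X g2 h2.
Proof.
move=> close12.
have s1_ge0 := supnorm_ge0 g1 h1; have s2_ge0 := supnorm_ge0 g2 h2.
have [->|s1_fin] := eqVneq (supnorm X g1 h1) +oo.
  by rewrite addye ?leey // gt_eqF // (lt_le_trans _ s2_ge0) // ltNyr.
have [->|s2_fin] := eqVneq (supnorm X g2 h2) +oo.
  by rewrite addey ?leey // gt_eqF // (lt_le_trans _ s1_ge0) // ltNyr.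
move: s1_fin s2_fin; rewrite -!ltey -!ge0_fin_numE // => s1_fin s2_fin.
apply/lee_addgt0Pr => e e0.
have e2_gt0 : (0 < e / 2)%R by rewrite divr_gt0.
have [l1 [l1_ge0 l1_lt c1]] := @supnorm_lt_close g1 h1 (supnorm X g1 h1 + (e / 2)%:E)
  ltac:(by rewrite lteDl).
have [l2 [l2_ge0 l2_lt c2]] := @supnorm_lt_close g2 h2 (supnorm X g2 h2 + (e / 2)%:E)
  ltac:(by rewrite lteDl).
have c12 := close12 _ _ l1_ge0 l2_ge0 c1 c2.
apply: le_trans (supnorm_le_close (addr_ge0 l1_ge0 l2_ge0) c12) _.
rewrite EFinD; apply: le_trans (leeD (ltW l1_lt) (ltW l2_lt)) _.
by rewrite addeACA -EFinD -splitr.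
Qed.

Lemma supnorm_triangle g h k :
  supnorm X g k <= supnorm X g h + supnorm X h k.
Proof. by apply: supnorm_le_add => l1 l2 _ _; exact: close_on_trans. Qed.

Lemma supnorm_nonexpansive g h g' h' :
  (forall l, (0 <= l)%R -> close_on g h l -> close_on g' h' l) ->
  supnorm X g' h' <= supnorm X g h.
Proof.
move=> gh; rewrite -[leRHS]adde0 -(supnorm_id g).
apply: supnorm_le_add => l1 l2 l1_ge0 l2_ge0 /(gh _ l1_ge0) c _.
by apply: close_on_le c; rewrite lerDl.
Qed.

Lemma supnorm_PW_PZ g :
  supnorm X (PW X w (PZ X z g)) g <= supnorm X (PZ X z g) g + supnorm X (PW X w g) g.
Proof.
apply: le_trans (supnorm_triangle _ (PW X w g) _) _; rewrite leeD2r //.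
by apply: supnorm_nonexpansive => l _ [gh hg]; split=> x _; exact: PW_le_on.
Qed.

End Nonexpansive.

Section MaxPlusRecursion.
Variables (R : realType) (n m p q : nat) (X : set 'rV[R]_n) (U : set 'rV[R]_m).
Variables (ell : 'rV[R]_n -> 'rV[R]_m -> R) (f : 'rV[R]_n -> 'rV[R]_m -> 'rV[R]_n).
Variables (w : 'I_p -> 'rV[R]_n -> \bar R) (z : 'I_q -> 'rV[R]_n -> \bar R).
Local Open Scope ereal_scope.

Lemma S_Wop t (la : 'I_p -> \bar R) x :
  S X U ell f t (Wop w la) x =
  ereal_sup [set S X U ell f t (w i) x + la i | i in [set: 'I_p]].
Proof.
apply/eqP/eq_leP => M; apply/idP/idP.
- move/ereal_sup_leP => SM; apply/ereal_sup_leP => _ [i _ <-].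
  apply/ereal_sup_addr_leP => _ [u [y [adm ->]]]; rewrite -addeA.
  have /ereal_sup_addl_leP : run_cost ell t u y + Wop w la (y t) <= M.
    by apply: SM; exists u, y.
  by apply; exists i.
- move/ereal_sup_leP => SM; apply/ereal_sup_leP => _ [u [y [adm ->]]].
  apply/ereal_sup_addl_leP => _ [i _ <-]; rewrite addeA.
  have /ereal_sup_addr_leP : S X U ell f t (w i) x + la i <= M by apply: SM; exists i.
  by apply; exists u, y.
Qed.

Lemma pairing_Wop (e : 'rV[R]_n -> \bar R) (G : 'I_p -> 'rV[R]_n -> \bar R)
    (la : 'I_p -> \bar R) :
  pairing X e (fun x => ereal_sup [set G i x + la i | i in [set: 'I_p]]) =
  ereal_sup [set pairing X e (G i) + la i | i in [set: 'I_p]].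
Proof.
apply/eqP/eq_leP => M; apply/idP/idP.
- move/ereal_sup_leP => eGM; apply/ereal_sup_leP => _ [i _ <-].
  apply/ereal_sup_addr_leP => _ [x Xx <-]; rewrite -addeA.
  have /ereal_sup_addl_leP : e x + ereal_sup [set G i x + la i | i in [set: 'I_p]] <= M.
    by apply: eGM; exists x.
  by apply; exists i.
- move/ereal_sup_leP => eGM; apply/ereal_sup_leP => _ [x Xx <-].
  apply/ereal_sup_addl_leP => _ [i _ <-]; rewrite addeA.
  have /ereal_sup_addr_leP : pairing X e (G i) + la i <= M by apply: eGM; exists i.
  by apply; exists x.
Qed.

Lemma mxact_pairing_S t (la : 'I_p -> \bar R) j :
  mxact (fun j i => pairing X (z j) (S X U ell f t (w i))) la j =
  pairing X (z j) (S X U ell f t (Wop w la)).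
Proof.
have -> : S X U ell f t (Wop w la) =
    (fun x => ereal_sup [set S X U ell f t (w i) x + la i | i in [set: 'I_p]]).
  by apply: funext => x; exact: S_Wop.
by rewrite pairing_Wop.
Qed.

Lemma mxres_pairing_PZ (mu : 'I_q -> \bar R) (g : 'rV[R]_n -> \bar R) :
  (forall j, mu j = pairing X (z j) g) ->
  mxres (fun j i => pairing X (z j) (w i)) mu = Wres X w (PZ X z g).
Proof.
move=> muE; apply: funext => i; apply/eqP/eq_geP => M; apply/idP/idP.
- move/ereal_inf_geP => Mres; apply/ereal_inf_geP => _ [x Xx <-].
  apply/resid_geP/ereal_inf_geP => _ [j _ <-]; apply/resid_geP; rewrite addeA.
  have /resid_geP : M <= resid (pairing X (z j) (w i)) (mu j) by apply: Mres; exists j.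
  rewrite muE; apply: le_trans; rewrite leeD2r //.
  by apply: ereal_sup_ubound; exists x.
- move/ereal_inf_geP => Mres; apply/ereal_inf_geP => _ [j _ <-].
  apply/resid_geP; rewrite muE; apply/ereal_sup_addr_leP => _ [x Xx <-].
  have /resid_geP/ereal_inf_geP := Mres _ (ex_intro2 _ _ x Xx erefl).
  by move/(_ _ (ex_intro2 _ _ j I erefl))/resid_geP; rewrite addeA.
Qed.

Lemma Wop_mpfem_coeffsS delta phi k :
  Wop w (mpfem_coeffs X U ell f delta phi w z k.+1) =
  PW X w (PZ X z (S X U ell f delta (Wop w (mpfem_coeffs X U ell f delta phi w z k)))).
Proof. by rewrite /= (mxres_pairing_PZ (mxact_pairing_S _ _)). Qed.

End MaxPlusRecursion.

Definition glue (R : realType) (T : Type) (s : R) (g1 g2 : R -> T) : R -> T :=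
  fun r => if r <= s then g1 r else g2 (r - s).

Lemma glue_map2 (R : realType) (T T' V : Type) (F : T -> T' -> V) (s : R)
    (g1 g2 : R -> T) (h1 h2 : R -> T') :
  (fun r => F (glue s g1 g2 r) (glue s h1 h2 r)) =
  glue s (fun r => F (g1 r) (h1 r)) (fun r => F (g2 r) (h2 r)).
Proof. by apply: funext => r; rewrite /glue; case: ifP. Qed.

Section LebesgueTranslation.
Variable R : realType.
Notation mu := (@lebesgue_measure R).

Lemma measurable_addr (c : R) :
  measurable_fun [set: measurableTypeR R]
    (fun x : measurableTypeR R => x + c : measurableTypeR R).
Proof. by apply: measurable_funD => //; exact: measurable_id. Qed.

(* The pushforward is a measure only given the measurability of the map, so
   its instance has to be named explicitly. *)
Let translated (c : R) : {measure set (measurableTypeR R) -> \bar R} :=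
  measure_function_pushforward__canonical__measure_function_Measure mu (measurable_addr c).

Lemma lebesgue_measure_addr_preimage (c : R) (A : set R) :
  measurable (A : set (measurableTypeR R)) -> mu A = mu ((fun x => x + c) @^-1` A).
Proof.
move=> mA; have := @lebesgue_measure_unique R (translated c) _ A mA; apply.
move=> _ [[a b] _ <-] /=; rewrite /translated /= /pushforward.
have -> : (fun x => x + c) @^-1` `]a, b]%classic = `]a - c, b - c]%classic.
  by apply/seteqP; split=> x /=; rewrite !in_itv /= => /andP[? ?]; apply/andP; split; lra.
rewrite !lebesgue_measure_itv /= !lte_fin ltrBlDr subrK.
by case: ifP => // _; rewrite -!EFinD; congr (_%:E); lra.
Qed.

Lemma integral_addr_preimage (c : R) (D : set R) (h : R -> \bar R) :
  measurable (D : set (measurableTypeR R)) -> measurable_fun D h ->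
  (\int[mu]_(x in D) h x = \int[mu]_(x in (fun x => x + c)%R @^-1` D) h (x + c)%R)%E.
Proof.
move=> mD mh.
rewrite (eq_measure_integral (translated c)); last first.
  by move=> A mA _; exact: lebesgue_measure_addr_preimage.
rewrite integralE [RHS]integralE /translated /=.
rewrite (ge0_integral_pushforward (measurable_addr c) _ mD (measurable_funepos mh)) //.
rewrite (ge0_integral_pushforward (measurable_addr c) _ mD (measurable_funeneg mh)) //.
by congr (_ - _)%E; apply: eq_integral => x _; rewrite /= ?funeposE ?funenegE.
Qed.

Lemma ae_addr (c : R) (P : R -> Prop) :
  {ae mu, forall x, P x} -> {ae mu, forall x, P (x + c)}.
Proof.
move=> [A [mA A0 PA]]; exists ((fun x => x + c) @^-1` A); split.
- by rewrite -[X in measurable X]setTI; exact: measurable_addr.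
- by rewrite -lebesgue_measure_addr_preimage.
- by move=> x /= nP; exact: PA.
Qed.

Lemma ae_mono (P Q : R -> Prop) : (forall x, P x -> Q x) ->
  {ae mu, forall x, P x} -> {ae mu, forall x, Q x}.
Proof.
move=> PQ [A [mA A0 PA]]; exists A; split => // x /= nQ; apply: PA => /= Px.
exact/nQ/PQ.
Qed.

Lemma ae_and (P Q : R -> Prop) :
  {ae mu, forall x, P x} -> {ae mu, forall x, Q x} -> {ae mu, forall x, P x /\ Q x}.
Proof.
by move=> aeP aeQ; apply: negligibleS (negligibleU aeP aeQ) => x /= /not_andP.
Qed.

Lemma ae_neq (s : R) : {ae mu, forall x, x != s}.
Proof.
exists [set s]; split => //; first exact: lebesgue_measure_set1.
by move=> x /= /negP; rewrite negbK => /eqP.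
Qed.

Lemma measurable_fun_addr (D E : set R) (c : R) (h : R -> R) :
  measurable (D : set (measurableTypeR R)) -> measurable (E : set (measurableTypeR R)) ->
  (forall x, E x -> D (x + c)) ->
  measurable_fun D h -> measurable_fun E (fun x => h (x + c)).
Proof.
move=> mD mE ED mh.
apply: (@measurable_comp _ _ _ _ _ _ D h E (fun x : R => x + c)) => //.
  by move=> _ [x Ex <-]; exact: ED.
exact: measurable_funS (measurable_addr c).
Qed.

Lemma itv_cc0_split (s t : R) : 0 <= s -> 0 <= t ->
  `[0, s + t]%classic = `[0, s]%classic `|` `]s, s + t]%classic.
Proof.
move=> s0 t0; apply/seteqP; split=> x /=; rewrite !in_itv /=.
  by move=> /andP[x0 xst]; case: (lerP x s) => xs; [left|right]; apply/andP; split.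
by case=> /andP[? ?]; apply/andP; split; lra.
Qed.

Lemma measurable_fun_glue (s t : R) (h1 h2 : R -> R) : 0 <= s -> 0 <= t ->
  measurable_fun `[0, s]%classic h1 -> measurable_fun `[0, t]%classic h2 ->
  measurable_fun `[0, s + t]%classic (glue s h1 h2).
Proof.
move=> s0 t0 mh1 mh2; rewrite /glue itv_cc0_split //; apply/measurable_funU => //; split.
  by apply: eq_measurable_fun mh1 => x; rewrite inE /= in_itv /= => /andP[_ ->].
have : measurable_fun `]s, s + t]%classic (fun x => h2 (x + - s)).
  apply: measurable_fun_addr mh2 => // x /=; rewrite !in_itv /= => /andP[? ?].
  by apply/andP; split; lra.
apply: eq_measurable_fun => x; rewrite inE /= in_itv /= => /andP[sx _].
by rewrite leNgt sx.
Qed.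

Lemma integral_itv_cc0_split (s t : R) (h : R -> R) : 0 <= s -> 0 <= t ->
  measurable_fun `[0, s + t]%classic h ->
  (\int[mu]_(r in `[0%R, (s + t)%R]) (h r)%:E =
   \int[mu]_(r in `[0%R, s]) (h r)%:E + \int[mu]_(r in `[0%R, t]) (h (r + s)%R)%:E)%E.
Proof.
move=> s0 t0 mh.
have mh_right : measurable_fun `]s, s + t]%classic h.
  by apply: measurable_funS mh => //; rewrite itv_cc0_split //; exact: subsetUr.
rewrite itv_cc0_split // integral_setU //; last 2 first.
- by rewrite -itv_cc0_split //; apply/measurable_EFinP.
- apply/disj_setPS => x [] /=; rewrite !in_itv /= => /andP[_ xs] /andP[sx _].
  by move: (lt_le_trans sx xs); rewrite ltxx.
congr (_ + _)%E; rewrite [LHS](integral_addr_preimage s) //; last exact/measurable_EFinP.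
have -> : (fun x => x + s) @^-1` `]s, s + t]%classic = `]0, t]%classic.
  by apply/seteqP; split=> x /=; rewrite !in_itv /= => /andP[? ?]; apply/andP; split; lra.
apply: integral_itv_obnd_cbnd; apply/measurable_EFinP.
apply: (measurable_fun_addr (D := `]s, s + t]%classic)) mh_right => // x /=.
by rewrite !in_itv /= => /andP[? ?]; apply/andP; split; lra.
Qed.

End LebesgueTranslation.

Section AbsoluteContinuity.
Variables (R : realType) (n : nat).
Implicit Types (y : R -> 'rV[R]_n) (s t : R).

Lemma abs_cont_on_le y s t : 0 <= t -> abs_cont_on y (s + t) -> abs_cont_on y s.
Proof.
move=> t0 yac e e0; have [d d0 yd] := yac e e0; exists d => // K a b abK ordK sumK.
by apply: yd => // k kK; have [? [? ?]] := abK k kK; do 2?split => //; lra.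
Qed.

Lemma abs_cont_on_addr y s t : 0 <= s -> abs_cont_on y (s + t) ->
  abs_cont_on (fun r => y (r + s)) t.
Proof.
move=> s0 yac e e0; have [d d0 yd] := yac e e0; exists d => // K a b abK ordK sumK.
apply: (yd K (fun k => a k + s) (fun k => b k + s)).
- by move=> k kK; have [? [? ?]] := abK k kK; do 2?split; lra.
- by move=> k kK; have := ordK k kK; lra.
- by apply: le_lt_trans sumK; rewrite le_eqVlt; apply/orP; left; apply/eqP;
    apply: eq_bigr => k _; lra.
Qed.

Lemma glue_increment_le y1 y2 s a b : y1 s = y2 0 -> a <= b ->
  `|glue s y1 y2 b - glue s y1 y2 a| <=
    `|y1 (Num.min b s) - y1 (Num.min a s)| + `|y2 (Num.max b s - s) - y2 (Num.max a s - s)|.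
Proof.
move=> y12 ab; rewrite /glue !minEle !maxEle.
case: (lerP b s) => bs.
  by rewrite (le_trans ab bs) !subrr normr0 addr0.
case: (lerP a s) => as_; last by rewrite subrr normr0 add0r.
rewrite subrr -y12.
have -> : y2 (b - s) - y1 a = (y1 s - y1 a) + (y2 (b - s) - y1 s).
  by rewrite [RHS]addrC addrA subrK.
exact: ler_normD.
Qed.

Lemma abs_cont_on_glue y1 y2 s t : 0 <= s -> 0 <= t -> y1 s = y2 0 ->
  abs_cont_on y1 s -> abs_cont_on y2 t -> abs_cont_on (glue s y1 y2) (s + t).
Proof.
move=> s0 t0 y12 y1ac y2ac e e0.
have e2 : 0 < e / 2 by rewrite divr_gt0.
have [d1 d1_gt0 y1d] := y1ac _ e2; have [d2 d2_gt0 y2d] := y2ac _ e2.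
exists (Num.min d1 d2); first by rewrite lt_min d1_gt0 d2_gt0.
move=> K a b abK ordK; rewrite lt_min => /andP[sum_d1 sum_d2].
have sum1 : \sum_(k < K) `|y1 (Num.min (b k) s) - y1 (Num.min (a k) s)| < e / 2.
  apply: (y1d K (fun k => Num.min (a k) s) (fun k => Num.min (b k) s)).
  - move=> k kK; have [? [? ?]] := abK k kK; rewrite !minEle.
    by case: ifP => ?; case: ifP => ?; do 2?split; lra.
  - move=> k kK; have := ordK k kK; have [? [? ?]] := abK k (ltnW kK).
    have [? [? ?]] := abK k.+1 kK; rewrite !minEle.
    by case: ifP => ?; case: ifP => ?; lra.
  - apply: le_lt_trans sum_d1; apply: ler_sum => k _.
    have [? [? ?]] := abK k (ltn_ord k); rewrite !minEle.
    by case: ifP => ?; case: ifP => ?; lra.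
have sum2 : \sum_(k < K) `|y2 (Num.max (b k) s - s) - y2 (Num.max (a k) s - s)| < e / 2.
  apply: (y2d K (fun k => Num.max (a k) s - s) (fun k => Num.max (b k) s - s)).
  - move=> k kK; have [? [? ?]] := abK k kK; rewrite !maxEle.
    by case: ifP => ?; case: ifP => ?; do 2?split; lra.
  - move=> k kK; have := ordK k kK; have [? [? ?]] := abK k (ltnW kK).
    have [? [? ?]] := abK k.+1 kK; rewrite !maxEle.
    by case: ifP => ?; case: ifP => ?; lra.
  - apply: le_lt_trans sum_d2; apply: ler_sum => k _.
    have [? [? ?]] := abK k (ltn_ord k); rewrite !maxEle.
    by case: ifP => ?; case: ifP => ?; lra.
rewrite [e]splitr; apply: le_lt_trans (ltrD sum1 sum2).
rewrite -big_split /=; apply: ler_sum => k _.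
by have [? [? ?]] := abK k (ltn_ord k); exact: glue_increment_le.
Qed.

End AbsoluteContinuity.

Lemma derivable_addr (R : realType) (V : normedModType R) (y : R -> V) (r c : R) :
  derivable y (r + c) 1 ->
  derivable (fun x => y (x + c)) r 1 /\ 'D_1 (fun x => y (x + c)) r = 'D_1 y (r + c).
Proof.
have quotientE :
    (fun h : R => h^-1 *: (((fun x => y (x + c)) \o shift r) (h *: 1) - y (r + c))) =
    (fun h : R => h^-1 *: ((y \o shift (r + c)) (h *: 1) - y (r + c))).
  by apply: funext => h; rewrite /= addrA.
by rewrite /derivable /derive quotientE.
Qed.

Section DynamicProgramming.
Variables (R : realType) (n m : nat) (X : set 'rV[R]_n) (U : set 'rV[R]_m).
Variables (ell : 'rV[R]_n -> 'rV[R]_m -> R) (f : 'rV[R]_n -> 'rV[R]_m -> 'rV[R]_n).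
Notation mu := (@lebesgue_measure R).
Implicit Types (s t : R) (x : 'rV[R]_n).

Lemma admissible_split s t x u y : 0 <= s -> 0 <= t ->
  admissible X U ell f (s + t) x u y ->
  [/\ admissible X U ell f s x u y,
      admissible X U ell f t (y s) (fun r => u (r + s)) (fun r => y (r + s)) &
      run_cost ell (s + t) u y =
      (run_cost ell s u y +
       run_cost ell t (fun r => u (r + s)%R) (fun r => y (r + s)%R))%E].
Proof.
move=> s0 t0 [uU [um [yX [yac [yD [y0 ellm]]]]]].
have sub_left r : `[0, s]%classic r -> `[0, s + t]%classic r.
  by rewrite /= !in_itv /= => /andP[? ?]; apply/andP; split; lra.
have sub_right r : `[0, t]%classic r -> `[0, s + t]%classic (r + s).
  by rewrite /= !in_itv /= => /andP[? ?]; apply/andP; split; lra.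
split.
- split; first by move=> r /sub_left; exact: uU.
  split; first by move=> i; exact: measurable_funS (um i).
  split; first by move=> r /sub_left; exact: yX.
  split; first exact: abs_cont_on_le yac.
  split.
    apply: ae_mono yD => r yDr sr; apply: yDr; move: sr => /=; rewrite !in_itv /=.
    by move=> /andP[? ?]; apply/andP; split; lra.
  by split => //; exact: measurable_funS ellm.
- split; first by move=> r /sub_right; exact: uU.
  split; first by move=> i; exact: (measurable_fun_addr _ _ sub_right (um i)).
  split; first by move=> r /sub_right; exact: yX.
  split; first exact: abs_cont_on_addr yac.
  split.
    apply: ae_mono (ae_addr s yD) => r yDr tr.
    have [yd Dy] : derivable y (r + s) 1 /\ 'D_1 y (r + s) = f (y (r + s)) (u (r + s)).
      apply: yDr; move: tr => /=; rewrite !in_itv /= => /andP[? ?].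
      by apply/andP; split; lra.
    by have [? ->] := derivable_addr yd; rewrite Dy.
  split; first by rewrite add0r.
  exact: (measurable_fun_addr _ _ sub_right ellm).
- exact: integral_itv_cc0_split.
Qed.

Lemma glue_derivable (V : normedModType R) (y1 y2 : R -> V) (v1 v2 : R -> V) s t :
  0 <= s ->
  {ae mu, forall r, `]0, s[%classic r -> derivable y1 r 1 /\ 'D_1 y1 r = v1 r} ->
  {ae mu, forall r, `]0, t[%classic r -> derivable y2 r 1 /\ 'D_1 y2 r = v2 r} ->
  {ae mu, forall r, `]0, s + t[%classic r ->
     derivable (glue s y1 y2) r 1 /\ 'D_1 (glue s y1 y2) r = glue s v1 v2 r}.
Proof.
(* Off the junction point s, the glued path coincides near r with one piece. *)
move=> s0 y1D y2D; apply: ae_mono (ae_and (ae_and y1D (ae_addr (- s) y2D)) (ae_neq s)).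
move=> r [[y1Dr y2Dr] rs]; rewrite /= in_itv /= => /andP[r0 rst].
case: (ltgtP r s) rs => //= rs _.
- have [d1 D1] : derivable y1 r 1 /\ 'D_1 y1 r = v1 r.
    by apply: y1Dr; rewrite /= in_itv /= r0 rs.
  have y1_glue : \forall x \near r, y1 x = glue s y1 y2 x.
    by apply: filterS (lt_nbhsl rs) => x xs; rewrite /glue (ltW xs).
  split; first exact: near_eq_derivable y1_glue d1.
  by rewrite -(near_eq_derive _ y1_glue) D1 /glue (ltW rs).
- have [d2 D2] : derivable y2 (r + - s) 1 /\ 'D_1 y2 (r + - s) = v2 (r + - s).
    by apply: y2Dr; rewrite /= in_itv /=; apply/andP; split; lra.
  have [d2s D2s] := derivable_addr d2.
  have y2_glue : \forall x \near r, y2 (x + - s) = glue s y1 y2 x.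
    by apply: filterS (lt_nbhsr rs) => x sx; rewrite /glue leNgt sx.
  split; first exact: near_eq_derivable y2_glue d2s.
  by rewrite -(near_eq_derive _ y2_glue) D2s D2 /glue leNgt rs.
Qed.

Lemma run_cost_glue s t u1 y1 u2 y2 : 0 <= s -> 0 <= t ->
  measurable_fun `[0, t]%classic (fun r => ell (y2 r) (u2 r)) ->
  measurable_fun `[0, s + t]%classic (fun r => ell (glue s y1 y2 r) (glue s u1 u2 r)) ->
  run_cost ell (s + t) (glue s u1 u2) (glue s y1 y2) =
  (run_cost ell s u1 y1 + run_cost ell t u2 y2)%E.
Proof.
move=> s0 t0 ell2m ellm; rewrite /run_cost integral_itv_cc0_split //; congr (_ + _)%E.
  apply: eq_integral => r; rewrite inE /= in_itv /= => /andP[_ rs].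
  by rewrite /glue rs.
have ell2m_oc : measurable_fun `]0, t]%classic (fun r => ell (y2 r) (u2 r)).
  apply: measurable_funS ell2m => // r /=; rewrite !in_itv /= => /andP[? ?].
  by apply/andP; split; lra.
rewrite -integral_itv_obnd_cbnd; last first.
  apply/measurable_EFinP; apply: measurable_fun_addr ellm => // r /=.
  by rewrite !in_itv /= => /andP[? ?]; apply/andP; split; lra.
rewrite -[RHS]integral_itv_obnd_cbnd; last exact/measurable_EFinP.
apply: eq_integral => r; rewrite inE /= in_itv /= => /andP[r0 _].
have rs_gt : (r + s <= s) = false by apply/negbTE; rewrite -ltNge; lra.
by rewrite /glue rs_gt addrK.
Qed.

Lemma admissible_glue s t x u1 y1 u2 y2 : 0 <= s -> 0 <= t ->
  admissible X U ell f s x u1 y1 -> admissible X U ell f t (y1 s) u2 y2 ->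
  [/\ admissible X U ell f (s + t) x (glue s u1 u2) (glue s y1 y2),
      run_cost ell (s + t) (glue s u1 u2) (glue s y1 y2) =
      (run_cost ell s u1 y1 + run_cost ell t u2 y2)%E &
      glue s y1 y2 (s + t) = y2 t].
Proof.
move=> s0 t0 [u1U [u1m [y1X [y1ac [y1D [y10 ell1m]]]]]]
  [u2U [u2m [y2X [y2ac [y2D [y20 ell2m]]]]]].
have glue_cases r : `[0, s + t]%classic r ->
    (r <= s /\ `[0, s]%classic r) \/ (s < r /\ `[0, t]%classic (r - s)).
  rewrite /= !in_itv /= => /andP[? ?].
  by case: (lerP r s) => rs; [left|right]; split => //; apply/andP; split; lra.
have ellm : measurable_fun `[0, s + t]%classic
    (fun r => ell (glue s y1 y2 r) (glue s u1 u2 r)).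
  by rewrite glue_map2; exact: measurable_fun_glue s0 t0 ell1m ell2m.
split.
- split.
    by move=> r /glue_cases [[rs ?]|[rs ?]]; rewrite /glue ?rs ?(leNgt r s) ?rs /=;
      [exact: u1U|exact: u2U].
  split.
    move=> i; have := glue_map2 (fun _ (v : 'rV[R]_m) => v ord0 i) s y1 y2 u1 u2.
    by rewrite /= => ->; exact: measurable_fun_glue s0 t0 (u1m i) (u2m i).
  split.
    by move=> r /glue_cases [[rs ?]|[rs ?]]; rewrite /glue ?rs ?(leNgt r s) ?rs /=;
      [exact: y1X|exact: y2X].
  split; first exact: abs_cont_on_glue.
  split.
    apply: ae_mono (glue_derivable s0 y1D y2D) => r Dr rst.
    by have [? ->] := Dr rst; rewrite /glue; case: ifP.
  by split => //; rewrite /glue s0.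
- exact: run_cost_glue.
- rewrite /glue; case: ifP => [sts|_]; last by rewrite addrAC subrr add0r.
  have -> : t = 0 by lra.
  by rewrite addr0 y20.
Qed.

Lemma S_add s t g x : 0 <= s -> 0 <= t ->
  S X U ell f (s + t) g x = S X U ell f s (S X U ell f t g) x.
Proof.
move=> s0 t0; apply/eqP/eq_leP => M; apply/idP/idP.
- move/ereal_sup_leP => SM; apply/ereal_sup_leP => _ [u1 [y1 [adm1 ->]]].
  apply/ereal_sup_addl_leP => _ [u2 [y2 [adm2 ->]]].
  have [adm run_glue end_glue] := admissible_glue s0 t0 adm1 adm2.
  by rewrite addeA -run_glue -end_glue; apply: SM; exists (glue s u1 u2), (glue s y1 y2).
- move/ereal_sup_leP => SM; apply/ereal_sup_leP => _ [u [y [adm ->]]].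
  have [adm1 adm2 ->] := admissible_split s0 t0 adm.
  rewrite -addeA; apply: le_trans (SM (run_cost ell s u y + S X U ell f t g (y s))%E _).
    apply: leeD => //; apply: ereal_sup_ubound.
    by exists (fun r => u (r + s)), (fun r => y (r + s)); rewrite (addrC t).
  by exists u, y.
Qed.

Lemma run_cost0 u y : run_cost ell 0 u y = 0%E.
Proof.
rewrite /run_cost; have -> : `[0, 0]%classic = [set 0 : R].
  apply/seteqP; split=> r /=; last by move=> ->; rewrite in_itv /= lexx.
  by rewrite in_itv /= => /andP[r0 r0']; apply/eqP; rewrite eq_le r0 r0'.
exact: integral_set1.
Qed.

Lemma S0 g x : (exists u0, U u0) -> X x -> S X U ell f 0 g x = g x.
Proof.
move=> [u0 Uu0] Xx; apply/le_anti/andP; split.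
  apply/ereal_sup_leP => _ [u [y [[_ [_ [_ [_ [_ [y0 _]]]]]] ->]]].
  by rewrite run_cost0 add0e y0.
apply: ereal_sup_ubound; exists (fun _ => u0), (fun _ => x).
split; last by rewrite run_cost0 add0e.
split => //; split; first by move=> i; exact: measurable_cst.
split => //; split.
  by move=> e e0; exists 1 => // K a b _ _ _; rewrite big1 // => k _; rewrite subrr normr0.
split; last by split.
apply: aeW => r /=; rewrite in_itv /= => /andP[r0 r0'].
by move: (lt_trans r0 r0'); rewrite ltxx.
Qed.

Lemma S_no_controls t g x : ~ (exists u0, U u0) -> 0 <= t -> S X U ell f t g x = -oo%E.
Proof.
move=> noU t0; apply/eqP; rewrite -leeNy_eq; apply/ereal_sup_leP => a [u [y [[uU _] _]]].
by exfalso; apply: noU; exists (u 0); apply: uU; rewrite /= in_itv /= lexx t0.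
Qed.

End DynamicProgramming.

Section ErrorRecursion.
Variables (R : realType) (n m p q : nat) (X : set 'rV[R]_n) (U : set 'rV[R]_m).
Variables (ell : 'rV[R]_n -> 'rV[R]_m -> R) (f : 'rV[R]_n -> 'rV[R]_m -> 'rV[R]_n).
Variables (phi : 'rV[R]_n -> \bar R) (delta : R).
Variables (w : 'I_p -> 'rV[R]_n -> \bar R) (z : 'I_q -> 'rV[R]_n -> \bar R).
Hypothesis delta_ge0 : 0 <= delta.
Local Open Scope ereal_scope.

Let v k := S X U ell f (k%:R * delta)%R phi.
Let vh k := Wop w (mpfem_coeffs X U ell f delta phi w z k).
Let eps k := supnorm X (PZ X z (v k)) (v k) + supnorm X (PW X w (v k)) (v k).
Let step g := PW X w (PZ X z (S X U ell f delta g)).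

Let v_succ k : v k.+1 = S X U ell f delta (v k).
Proof.
apply: funext => x; rewrite /v -S_add ?mulr_ge0 //.
by rewrite -natr1 mulrDl mul1r addrC.
Qed.

Let eps_ge0 k : 0 <= eps k.
Proof. exact: adde_ge0 (supnorm_ge0 _ _ _) (supnorm_ge0 _ _ _). Qed.

Let supnorm_step g h : supnorm X (step g) (step h) <= supnorm X g h.
Proof.
apply: supnorm_nonexpansive => l _ [gh hg].
by split=> x _; apply: PW_le_on => y _; apply: PZ_le_on => y' _; exact: S_le_on.
Qed.

Let error_succ k :
  supnorm X (vh k.+1) (v k.+1) <= supnorm X (step (vh k)) (step (v k)) + eps k.+1.
Proof.
rewrite /vh Wop_mpfem_coeffsS -/(vh k) -/(step (vh k)).
apply: le_trans (supnorm_triangle _ _ (step (v k)) _) _; apply: leeD => //.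
by rewrite /eps v_succ; exact: supnorm_PW_PZ.
Qed.

Let error_step_init : supnorm X (step (vh 0)) (step (v 0)) <= eps 0.
Proof.
(* v 0 agrees with phi on X only if some control exists; otherwise S^delta
   is identically -oo and step is constant. *)
have [[u0 Uu0]|noU] := pselect (exists u0, U u0); last first.
  have stepE g : step g = step phi.
    by rewrite /step; congr (PW X w (PZ X z _)); apply: funext => x; rewrite !S_no_controls.
  by rewrite stepE [step (v 0)]stepE supnorm_id.
have -> : vh 0 = PW X w (v 0).
  rewrite /vh /PW /=; congr Wop; apply: funext => i; congr ereal_inf.
  by apply: eq_imagel => x Xx; rewrite /v mul0r S0 //; exists u0.
by apply: le_trans (supnorm_step _ _) _; rewrite leeDr // supnorm_ge0.
Qed.

Lemma mpfem_error_bound N b : (0 < N)%N -> (forall k, (k <= N)%N -> eps k <= b) ->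
  supnorm X (vh N) (v N) <= N.+1%:R%:E * b.
Proof.
case: N => // N _ epsb; have b_ge0 : 0 <= b by exact: le_trans (eps_ge0 0) (epsb 0%N _).
elim: N epsb => [|N IH] epsb; apply: le_trans (error_succ _) _;
  rewrite -natr1 EFinD ge0_muleDl // mul1e; apply: leeD; try exact: epsb.
- exact: le_trans error_step_init (epsb 0%N _).
- by apply: le_trans (supnorm_step _ _) _; apply: IH => k kN; apply: epsb; exact: leqW.
Qed.

End ErrorRecursion.

Theorem corollary5p3 (R : realType) (n m p q : nat)
  (X : set 'rV[R]_n) (U : set 'rV[R]_m)
  (ell : 'rV[R]_n -> 'rV[R]_m -> R) (f : 'rV[R]_n -> 'rV[R]_m -> 'rV[R]_n)
  (T : R) (phi : 'rV[R]_n -> \bar R)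
  (w : 'I_p -> 'rV[R]_n -> \bar R) (z : 'I_q -> 'rV[R]_n -> \bar R)
  (N : nat) :
  0 < T -> (1 <= N)%N -> (0 < p)%N -> (0 < q)%N ->
  (forall x, X x -> phi x != +oo%E) ->
  (forall i x, X x -> w i x != +oo%E) ->
  (forall j x, X x -> z j x != +oo%E) ->
  let delta := T / N%:R in
  let v := fun t : R => S X U ell f t phi in
  let vh := Wop w (mpfem_coeffs X U ell f delta phi w z N) in
  (supnorm X vh (v T) <=
     ((1 + T / delta)%:E *
      ereal_sup [set (supnorm X (PZ X z (v (k%:R * delta)%R)) (v (k%:R * delta)%R)
                      + supnorm X (PW X w (v (k%:R * delta)%R)) (v (k%:R * delta)%R))%E
                 | k in [set k : nat | (k <= N)%N]]))%E.
Proof.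
move=> T_gt0 N_gt0 _ _ _ _ _; cbv zeta; set delta := T / N%:R.
have N_neq0 : N%:R != 0 :> R by rewrite pnatr_eq0 -lt0n.
have delta_gt0 : 0 < delta by rewrite divr_gt0 // ltr0n.
have T_eq : T = N%:R * delta by rewrite /delta mulrC divfK.
have -> : T / delta = N%:R by rewrite {1}T_eq mulfK // gt_eqF.
rewrite nat1r T_eq.
apply: mpfem_error_bound => // [|k kN]; first exact: ltW.
by apply: ereal_sup_ubound; exists k.
Qed.
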